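(* Let $A$ and $B$ be algebras such that the right $A$-module $A_A$ is idempotent and non-degenerate, let $s\colon B\to M(A)$ be a homomorphism and $t\colon B\to M(A)$ an anti-homomorphism with commuting images such that the $B$-modules ${}_BA$ and $A^B$ are faithful and idempotent. Assume moreover one of the following: (1) the right module $A_A$ has local units in $A$; (2) there exists a left separability multiplier $E\in M(B\otimes B^{\mathrm{op}})$; (3) the algebra $B$ is firm and the $B$-modules ${}_BA$ and $A^B$ are locally projective. Then ${}_BA\otimes A^B$ is non-degenerate as a right module over $A\otimes1$ and over $1\otimes A$.
   Context: All algebras are associative complex algebras, not necessarily unital. For an algebra $A$ with $A_A$ non-degenerate, $L(A)$ is the algebra of right $A$-module endomorphisms of $A$, containing $A$ via left multiplication, and $M(A)=\{T\in L(A): aT\in A\ \forall a\in A\}$. ${}_BA$ is $A$ as a left $B$-module via $x\cdot a=s(x)a$; $A^B$ is $A$ as a right $B$-module via $a\cdot x=t(x)a$; faithful and idempotent means $s$, $t$ injective and $s(B)A=A=t(B)A$. ${}_BA\otimes A^B$ is the quotient of $A\otimes A$ by the span of $s(x)a\otimes b-a\otimes t(x)b$; it is a right module over $A\otimes1$ and $1\otimes A$ by right multiplication in the respective factor; non-degenerate means: if $w(c\otimes1)=0$ for all $c\in A$ then $w=0$ (and likewise for $1\otimes c$). A module $M_D$ is non-degenerate if $mD=0$ implies $m=0$; $A_A$ has local units if for every finite $F\subseteq A$ there is $e\in A$ with $ae=a$ for all $a\in F$. Under the hypotheses $B$ is a non-degenerate algebra, so $M(B\otimes B^{\mathrm{op}})$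 makes sense. A left separability multiplier is $E\in M(B\otimes B^{\mathrm{op}})$ such that for all $x\in B$, $E(x\otimes1)=E(1\otimes x^{\mathrm{op}})\in B\otimes B^{\mathrm{op}}$ and the linear map $y\otimes z^{\mathrm{op}}\mapsto zy$ sends this element to $x$. An algebra $D$ is firm if multiplication $D\otimes_DD\to D$ is an isomorphism. A $D$-module $M$ is locally projective if for every finite $F\subseteq M$ there are finitely many module maps $\upsilon_i\colon M\to D$ and $m_i\colon D\to M$ with $\sum_im_i(\upsilon_i(m))=m$ for all $m\in F$. *)

From HB Require Import structures.
From mathcomp Require Import all_boot all_algebra.
From mathcomp Require Import Rstruct complex.
From mathcomp.multinomials Require Import freeg.

Set Implicit Arguments.
Unset Strict Implicit.
Unset Printing Implicit Defensive.

Import GRing.Theory.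
Local Open Scope ring_scope.

Definition Cx : fieldType := Rdefinitions.R[i].

Section Defs.
Variable K : fieldType.

Definition is_linear (U V : lmodType K) (f : U -> V) : Prop :=
  forall (k : K) (u v : U), f (k *: u + v) = k *: f u + f v.

Definition is_algebra (A : lmodType K) (mA : A -> A -> A) : Prop :=
  [/\ forall a b c, mA a (mA b c) = mA (mA a b) c,
      forall a, is_linear (mA a) & forall b, is_linear (fun a => mA a b)].

Definition right_idempotent (A : lmodType K) (mA : A -> A -> A) : Prop :=
  forall a : A, exists l : seq (A * A), a = \sum_(p <- l) mA p.1 p.2.

Definition right_nondegenerate (A : lmodType K) (mA : A -> A -> A) : Prop :=
  forall a : A, (forall c, mA a c = 0) -> a = 0.

Definition in_L (A : lmodType K) (mA : A -> A -> A) (T : A -> A) : Prop :=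
  is_linear T /\ forall a b, T (mA a b) = mA (T a) b.

(* T is an element of M(A): T in L(A) and aT in A for all a in A, where A sits
   in L(A) by left multiplication and the product of L(A) is composition. *)
Definition in_M (A : lmodType K) (mA : A -> A -> A) (T : A -> A) : Prop :=
  in_L mA T /\ forall a, exists a', forall b, mA a (T b) = mA a' b.

Definition mult_hom (B A : lmodType K) (mB : B -> B -> B) (mA : A -> A -> A)
    (s : B -> A -> A) : Prop :=
  [/\ forall x, in_M mA (s x),
      forall (k : K) x y a, s (k *: x + y) a = k *: s x a + s y a &
      forall x y a, s (mB x y) a = s x (s y a)].

Definition mult_antihom (B A : lmodType K) (mB : B -> B -> B) (mA : A -> A -> A)
    (t : B -> A -> A) : Prop :=
  [/\ forall x, in_M mA (t x),
      forall (k : K) x y a, t (k *: x + y) a = k *: t x a + t y a &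
      forall x y a, t (mB x y) a = t y (t x a)].

Definition faithful_idempotent (B A : lmodType K) (f : B -> A -> A) : Prop :=
  (forall x y, (forall a, f x a = f y a) -> x = y) /\
  (forall a : A, exists l : seq (B * A), a = \sum_(p <- l) f p.1 p.2).

Definition free (X : choiceType) := {freeg X / K}.

Definition in_span (V : lmodType K) (P : V -> Prop) (w : V) : Prop :=
  exists l : seq (K * V),
    (forall p, List.In p l -> P p.2) /\ w = \sum_(p <- l) p.1 *: p.2.

(* Relations defining X (x) Y = free(X x Y) / (bilinearity relations). *)
Definition bilin_rel (X Y : lmodType K) (w : free (X * Y)%type) : Prop :=
  [\/ exists x x' y, w = << (x + x', y) >> - << (x, y) >> - << (x', y) >>,
      exists x y y', w = << (x, y + y') >> - << (x, y) >> - << (x, y') >>,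
      exists k x y, w = << (k *: x, y) >> - k *: << (x, y) >>
    | exists k x y, w = << (x, k *: y) >> - k *: << (x, y) >> ].

(* Relations defining  _B A (x) A^B : bilinearity and
   s(x)a (x) b = a (x) t(x)b. *)
Definition bal_rel (B A : lmodType K) (s t : B -> A -> A)
    (w : free (A * A)%type) : Prop :=
  bilin_rel w \/ exists x a b, w = << (s x a, b) >> - << (a, t x b) >>.

Definition act_left (A : lmodType K) (mA : A -> A -> A) (c : A)
    (w : free (A * A)%type) : free (A * A)%type :=
  fglift (fun p : A * A => << (mA p.1 c, p.2) >> : free (A * A)%type) w.
Definition act_right (A : lmodType K) (mA : A -> A -> A) (c : A)
    (w : free (A * A)%type) : free (A * A)%type :=
  fglift (fun p : A * A => << (p.1, mA p.2 c) >> : free (A * A)%type) w.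

(* An element of the quotient is represented by w : free(A x A), and
   it is zero iff w lies in the span of the defining relations. *)
Definition tensor_nondegenerate (B A : lmodType K) (mA : A -> A -> A)
    (s t : B -> A -> A) : Prop :=
  (forall w, (forall c, in_span (bal_rel s t) (act_left mA c w)) ->
             in_span (bal_rel s t) w) /\
  (forall w, (forall c, in_span (bal_rel s t) (act_right mA c w)) ->
             in_span (bal_rel s t) w).

Definition right_local_units (A : lmodType K) (mA : A -> A -> A) : Prop :=
  forall F : seq A, exists e : A, forall a, a \in F -> mA a e = a.

(* B (x) B^op is represented by free(B x B) modulo the bilinearity relations;
   y (x) z^op is represented by << (y, z) >>. *)
Definition eqT (B : lmodType K) (w w' : free (B * B)%type) : Prop :=
  in_span (@bilin_rel B B) (w - w').

(* Multiplication of B (x) B^op: (y (x) z^op)(y' (x) z'^op) = yy' (x) (z'z)^op. *)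
Definition mulT (B : lmodType K) (mB : B -> B -> B)
    (w w' : free (B * B)%type) : free (B * B)%type :=
  fglift (fun p : B * B =>
    fglift (fun q : B * B => << (mB p.1 q.1, mB q.2 p.2) >> : free (B * B)%type)
      w') w.

(* Left multiplication by the multipliers x (x) 1 and 1 (x) x^op. *)
Definition lmul_x1 (B : lmodType K) (mB : B -> B -> B) (x : B)
    (w : free (B * B)%type) : free (B * B)%type :=
  fglift (fun q : B * B => << (mB x q.1, q.2) >> : free (B * B)%type) w.
Definition lmul_1x (B : lmodType K) (mB : B -> B -> B) (x : B)
    (w : free (B * B)%type) : free (B * B)%type :=
  fglift (fun q : B * B => << (q.1, mB q.2 x) >> : free (B * B)%type) w.

Definition mu_op (B : lmodType K) (mB : B -> B -> B)
    (w : free (B * B)%type) : B :=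
  fglift (fun q : B * B => mB q.2 q.1) w.

(* E is given by a
   linear map T on free(B x B) that preserves the bilinearity relations
   (i.e. a lift of the linear endomorphism E of B (x) B^op). *)
Definition left_separability_multiplier (B : lmodType K) (mB : B -> B -> B)
    (T : free (B * B)%type -> free (B * B)%type) : Prop :=
  [/\ is_linear T,
      forall w, in_span (@bilin_rel B B) w -> in_span (@bilin_rel B B) (T w),
      forall w w', eqT (T (mulT mB w w')) (mulT mB (T w) w'),
      forall d, exists d', forall e, eqT (mulT mB d (T e)) (mulT mB d' e) &
      (* E(x (x) 1) = E(1 (x) x^op) in B (x) B^op, mapped to x by mu_op *)
      forall x : B, exists d,
        [/\ forall e, eqT (T (lmul_x1 mB x e)) (mulT mB d e),
            forall e, eqT (T (lmul_1x mB x e)) (mulT mB d e) &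
            mu_op mB d = x]].

Definition mu (B : lmodType K) (mB : B -> B -> B)
    (w : free (B * B)%type) : B :=
  fglift (fun q : B * B => mB q.1 q.2) w.

Definition firm_rel (B : lmodType K) (mB : B -> B -> B)
    (w : free (B * B)%type) : Prop :=
  bilin_rel w \/ exists x y z, w = << (mB x y, z) >> - << (x, mB y z) >>.

Definition firm (B : lmodType K) (mB : B -> B -> B) : Prop :=
  (forall b : B, exists w, mu mB w = b) /\
  (forall w, mu mB w = 0 -> in_span (firm_rel mB) w).

(* Module maps for _B A (action x.a = s(x)a) and for A^B (a.x = t(x)a). *)
Definition left_locally_projective (B A : lmodType K) (mB : B -> B -> B)
    (s : B -> A -> A) : Prop :=
  forall F : seq A, exists l : seq ((A -> B) * (B -> A)),
    (forall p, List.In p l ->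
       [/\ is_linear p.1, is_linear p.2,
           forall x a, p.1 (s x a) = mB x (p.1 a) &
           forall x b, p.2 (mB x b) = s x (p.2 b)]) /\
    (forall a, a \in F -> \sum_(p <- l) p.2 (p.1 a) = a).

Definition right_locally_projective (B A : lmodType K) (mB : B -> B -> B)
    (t : B -> A -> A) : Prop :=
  forall F : seq A, exists l : seq ((A -> B) * (B -> A)),
    (forall p, List.In p l ->
       [/\ is_linear p.1, is_linear p.2,
           forall x a, p.1 (t x a) = mB (p.1 a) x &
           forall x b, p.2 (mB b x) = t x (p.2 b)]) /\
    (forall a, a \in F -> \sum_(p <- l) p.2 (p.1 a) = a).

End Defs.

From HB Require Import structures.
From mathcomp Require Import all_boot all_algebra.
From mathcomp Require Import Rstruct complex.
From mathcomp.multinomials Require Import freeg.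
From Stdlib Require Import ClassicalEpsilon.

(* A representative w of an element of _B A (x) A^B is zero there iff it lies in
   the span of the balancing relations.
   (1) A right unit e for the legs of w gives w (e (x) 1) = w.
   (3) Let (phi_i, m_i) and (psi_j, n_j) be dual bases of A^B and _B A on the
   legs of w.  The balanced map a (x) b |-> s(phi_i b) a intertwines the right
   actions of A, so by non-degeneracy of A it kills w; hence w_ij =
   sum phi_i(b) (x) psi_j(a) lies in the kernel of multiplication B (x) B -> B,
   which by firmness is spanned by the relations of B (x)_B B.  The map
   y (x) z |-> n_j(z) (x) m_i(y) sends these to balancing relations, and sends
   sum_ij w_ij back to w.
   (2) The separability multiplier gives a lift s(x)a (x) b |-> E(x (x) 1)(a (x) b)
   from _B A (x) A^B to A (x) A, well defined because E(x (x) 1)(1 (x) z^op) =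
   E(z (x) 1)(x (x) 1).  It is a section of the quotient map compatible with the
   right actions, which reduces the claim to A (x) A over the field, where it
   follows from non-degeneracy of A by expanding in linearly independent
   second legs. *)

Set Implicit Arguments.
Unset Strict Implicit.
Unset Printing Implicit Defensive.

Import GRing.Theory.
Local Open Scope ring_scope.

Section IsLinear.
Variables (K : fieldType) (U V : lmodType K) (f : U -> V).
Hypothesis f_lin : is_linear f.

Lemma is_linear0 : f 0 = 0.
Proof.
have := f_lin 1 0 0; rewrite !scale1r addr0 => /(congr1 (fun v => v - f 0)).
by rewrite subrr addrK => <-.
Qed.

Lemma is_linearD u v : f (u + v) = f u + f v.
Proof. by have := f_lin 1 u v; rewrite !scale1r. Qed.

Lemma is_linearZ k u : f (k *: u) = k *: f u.
Proof. by rewrite -[k *: u]addr0 f_lin is_linear0 addr0. Qed.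

Lemma is_linearN u : f (- u) = - f u.
Proof. by rewrite -scaleN1r is_linearZ scaleN1r. Qed.

Lemma is_linearB u v : f (u - v) = f u - f v.
Proof. by rewrite is_linearD is_linearN. Qed.

Lemma is_linear_sum (I : Type) (r : seq I) (F : I -> U) :
  f (\sum_(i <- r) F i) = \sum_(i <- r) f (F i).
Proof.
elim: r => [|i r IH]; first by rewrite !big_nil is_linear0.
by rewrite !big_cons is_linearD IH.
Qed.

End IsLinear.

Section FreeLift.
Variables (K : fieldType) (X : choiceType).
Local Notation F := {freeg X / K}.

HB.instance Definition _ (M : lmodType K) (f : X -> M) :=
  GRing.isAdditive.Build F M (fglift f) (lift_is_additive f).

Lemma fgliftU1 (M : lmodType K) (f : X -> M) x : fglift f << x >> = f x.
Proof. by rewrite liftU scale1r. Qed.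

Lemma fglift_is_linear (M : lmodType K) (f : X -> M) : is_linear (fglift f).
Proof.
move=> c D D'; rewrite raddfD /=; congr (_ + _).
elim/freeg_ind_dom0: D => [|k x D _ _ IH]; first by rewrite scaler0 raddf0 scaler0.
have scaleU : c *: << k *g x >> = << c * k *g x >> :> F.
  by apply/eqP/freeg_eqP => z; rewrite coeffZ !coeffU mulrA.
by rewrite scalerDr !raddfD /= IH scaleU !liftU scalerA.
Qed.

Lemma freeg_lcomb_repr (D : F) :
  exists l : seq (K * X), D = \sum_(p <- l) p.1 *: << p.2 >>.
Proof.
exists [seq (coeff z D, z) | z <- dom D]; rewrite big_map -{1}(freeg_sumE D).
apply: eq_bigr => z _ /=; apply/eqP/freeg_eqP => y.
by rewrite coeffZ !coeffU mul1r.
Qed.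

Lemma fglift_sumZ (M : lmodType K) (f : X -> M) (I : Type) (r : seq I)
    (c : I -> K) (G : I -> X) :
  fglift f (\sum_(i <- r) c i *: << G i >>) = \sum_(i <- r) c i *: f (G i).
Proof.
rewrite (is_linear_sum (fglift_is_linear f)); apply: eq_bigr => i _.
by rewrite (is_linearZ (fglift_is_linear f)) fgliftU1.
Qed.

Lemma eq_fglift (M : lmodType K) (f g : X -> M) : f =1 g -> fglift f =1 fglift g.
Proof.
move=> fg D; have [l ->] := freeg_lcomb_repr D; rewrite !fglift_sumZ.
by apply: eq_bigr => p _; rewrite fg.
Qed.

End FreeLift.

Lemma linear_fglift (K : fieldType) (X : choiceType) (M N : lmodType K)
    (f : X -> M) (g : M -> N) (D : {freeg X / K}) :
  is_linear g -> g (fglift f D) = fglift (fun x => g (f x)) D.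
Proof.
move=> g_lin; have [l ->] := freeg_lcomb_repr D; rewrite !fglift_sumZ (is_linear_sum g_lin).
by apply: eq_bigr => p _; rewrite (is_linearZ g_lin).
Qed.

Lemma fglift_comp (K : fieldType) (X Y : choiceType) (M : lmodType K)
    (f : X -> {freeg Y / K}) (g : Y -> M) (D : {freeg X / K}) :
  fglift g (fglift f D) = fglift (fun x => fglift g (f x)) D.
Proof. exact/linear_fglift/fglift_is_linear. Qed.

Lemma In_mem (T : eqType) (x : T) (s : seq T) : List.In x s -> x \in s.
Proof. by elim: s => //= y s IH [->|/IH]; rewrite inE ?eqxx // => ->; rewrite orbT. Qed.

Section Span.
Variables (K : fieldType) (V : lmodType K).
Implicit Types (P Q : V -> Prop) (v w : V).

Lemma span_gen P v : P v -> in_span P v.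
Proof.
move=> Pv; exists [:: (1, v)]; split; last by rewrite big_seq1 scale1r.
by move=> p [<-|[]].
Qed.

Lemma span0 P : in_span P 0.
Proof. by exists [::]; rewrite big_nil. Qed.

Lemma spanD P v w : in_span P v -> in_span P w -> in_span P (v + w).
Proof.
move=> [l [Pl ->]] [l' [Pl' ->]]; exists (l ++ l'); rewrite big_cat; split=> // p.
by case/(List.in_app_or l l' p); [exact: Pl | exact: Pl'].
Qed.

Lemma spanZ P k v : in_span P v -> in_span P (k *: v).
Proof.
move=> [l [Pl ->]]; exists [seq (k * p.1, p.2) | p <- l]; split.
  by move=> _ /List.in_map_iff[p [<- /Pl]].
by rewrite big_map scaler_sumr; apply: eq_bigr => p _; rewrite scalerA.
Qed.

Lemma spanN P v : in_span P v -> in_span P (- v).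
Proof. by rewrite -scaleN1r; apply: spanZ. Qed.

Lemma span_sum P (I : Type) (r : seq I) (G : I -> V) :
  (forall i, List.In i r -> in_span P (G i)) -> in_span P (\sum_(i <- r) G i).
Proof.
elim: r => [|i r IH] PG; first by rewrite big_nil; apply: span0.
by rewrite big_cons; apply: spanD; [apply: PG; left | apply: IH => j rj; apply: PG; right].
Qed.

Lemma span_ind P (Q : V -> Prop) : Q 0 ->
    (forall k v w, P v -> Q w -> Q (k *: v + w)) ->
  forall w, in_span P w -> Q w.
Proof.
move=> Q0 QS w [l [Pl ->]]; elim: l Pl => [|p l IH] Pl; first by rewrite big_nil.
by rewrite big_cons; apply: QS; [apply: Pl; left | apply: IH => q lq; apply: Pl; right].
Qed.

Lemma span_mono P Q w : (forall v, P v -> in_span Q v) -> in_span P w -> in_span Q w.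
Proof.
move=> PQ; apply: span_ind => [|k v w' Pv Qw']; first exact: span0.
by apply: spanD Qw'; apply/spanZ/PQ.
Qed.

End Span.

Lemma span_map (K : fieldType) (V W : lmodType K) (P : V -> Prop) (Q : W -> Prop)
    (f : V -> W) w :
  is_linear f -> (forall v, P v -> in_span Q (f v)) -> in_span P w -> in_span Q (f w).
Proof.
move=> f_lin PQ; elim/span_ind => [|k v w' Pv Qw']; first by rewrite is_linear0 //; apply: span0.
by rewrite f_lin; apply: spanD Qw'; apply/spanZ/PQ.
Qed.

Lemma linear_span_eq0 (K : fieldType) (V W : lmodType K) (P : V -> Prop) (f : V -> W) w :
  is_linear f -> (forall v, P v -> f v = 0) -> in_span P w -> f w = 0.
Proof.
move=> f_lin Pf; elim/span_ind => [|k v w' Pv fw']; first exact: is_linear0.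
by rewrite f_lin Pf // fw' scaler0 addr0.
Qed.

Definition eqmod (K : fieldType) (V : lmodType K) (P : V -> Prop) (u v : V) :=
  in_span P (u - v).

Section EqMod.
Variables (K : fieldType) (V : lmodType K) (P : V -> Prop).
Local Notation "u === v" := (eqmod P u v) (at level 70).

Lemma eqmod_refl u : u === u.
Proof. by rewrite /eqmod subrr; apply: span0. Qed.

Lemma eqmod_sym u v : u === v -> v === u.
Proof. by rewrite /eqmod => uv; rewrite -opprB; apply: spanN. Qed.

Lemma eqmod_trans u v w : u === v -> v === w -> u === w.
Proof. by move=> uv vw; have := spanD uv vw; rewrite addrA subrK. Qed.

Lemma eqmodD u v u' v' : u === v -> u' === v' -> u + u' === v + v'.
Proof. by move=> uv uv'; have := spanD uv uv'; rewrite /eqmod opprD addrACA. Qed.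

Lemma eqmodZ k u v : u === v -> k *: u === k *: v.
Proof. by move/(spanZ k); rewrite scalerBr. Qed.

Lemma eqmod_sum (I : Type) (r : seq I) (G G' : I -> V) :
  (forall i, List.In i r -> G i === G' i) -> \sum_(i <- r) G i === \sum_(i <- r) G' i.
Proof.
elim: r => [|i r IH] GG'; first by rewrite !big_nil; apply: eqmod_refl.
rewrite !big_cons; apply: eqmodD; first by apply: GG'; left.
by apply: IH => j rj; apply: GG'; right.
Qed.

Lemma eqmod0 u : u === 0 <-> in_span P u.
Proof. by rewrite /eqmod subr0. Qed.

Lemma eqmod_span u v : u === v -> in_span P v -> in_span P u.
Proof. by move=> uv Pv; have := spanD uv Pv; rewrite subrK. Qed.

End EqMod.

Lemma eqmod_map (K : fieldType) (V W : lmodType K) (P : V -> Prop) (Q : W -> Prop)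
    (f : V -> W) u v :
  is_linear f -> (forall x, P x -> in_span Q (f x)) -> eqmod P u v -> eqmod Q (f u) (f v).
Proof. by move=> f_lin PQ uv; rewrite /eqmod -(is_linearB f_lin); apply: span_map uv. Qed.

Lemma eqmod_fglift (K : fieldType) (X : choiceType) (V : lmodType K) (P : V -> Prop)
    (f g : X -> V) (D : {freeg X / K}) :
  (forall x, eqmod P (f x) (g x)) -> eqmod P (fglift f D) (fglift g D).
Proof.
move=> fg; have [l ->] := freeg_lcomb_repr D; rewrite !fglift_sumZ.
by apply: eqmod_sum => p _; apply/eqmodZ/fg.
Qed.

Section LinearMod.
Variables (K : fieldType) (U W : lmodType K) (P : W -> Prop) (g : U -> W).
Hypothesis g_lin : forall k u u', eqmod P (g (k *: u + u')) (k *: g u + g u').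

Lemma linear_mod0 : eqmod P (g 0) 0.
Proof.
have := g_lin 1 0 0; rewrite !scale1r addr0 /eqmod opprD addrA subrr add0r.
by move/spanN; rewrite opprK subr0.
Qed.

Lemma linear_modD u u' : eqmod P (g (u + u')) (g u + g u').
Proof. by have := g_lin 1 u u'; rewrite !scale1r. Qed.

Lemma linear_modZ k u : eqmod P (g (k *: u)) (k *: g u).
Proof.
have := g_lin k u 0; rewrite addr0 => /eqmod_trans; apply.
by have := eqmodD (eqmod_refl P (k *: g u)) linear_mod0; rewrite addr0.
Qed.

Lemma linear_mod_sum (I : Type) (r : seq I) (F : I -> U) :
  eqmod P (g (\sum_(i <- r) F i)) (\sum_(i <- r) g (F i)).
Proof.
elim: r => [|i r IH]; first by rewrite !big_nil; apply: linear_mod0.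
by rewrite !big_cons; apply: eqmod_trans (linear_modD _ _) (eqmodD (eqmod_refl _ _) IH).
Qed.

End LinearMod.

Section BilinRel.
Variables (K : fieldType) (A B : lmodType K).
Local Notation bl := (@bilin_rel K A B).
Local Notation "u =o v" := (eqmod bl u v) (at level 70).

Lemma bilinD1 x x' y : << (x + x', y) >> =o << (x, y) >> + << (x', y) >>.
Proof. by apply: span_gen; rewrite opprD addrA; constructor 1; exists x, x', y. Qed.

Lemma bilinD2 x y y' : << (x, y + y') >> =o << (x, y) >> + << (x, y') >>.
Proof. by apply: span_gen; rewrite opprD addrA; constructor 2; exists x, y, y'. Qed.

Lemma bilinZ1 k x y : << (k *: x, y) >> =o k *: << (x, y) >>.
Proof. by apply: span_gen; constructor 3; exists k, x, y. Qed.

Lemma bilinZ2 k x y : << (x, k *: y) >> =o k *: << (x, y) >>.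
Proof. by apply: span_gen; constructor 4; exists k, x, y. Qed.

Lemma bilin_lin1 y k x x' : << (k *: x + x', y) >> =o k *: << (x, y) >> + << (x', y) >>.
Proof.
by apply: eqmod_trans (bilinD1 _ _ _) _; apply: eqmodD (bilinZ1 _ _ _) (eqmod_refl _ _).
Qed.

Lemma bilin_lin2 x k y y' : << (x, k *: y + y') >> =o k *: << (x, y) >> + << (x, y') >>.
Proof.
by apply: eqmod_trans (bilinD2 _ _ _) _; apply: eqmodD (bilinZ2 _ _ _) (eqmod_refl _ _).
Qed.

Lemma bilin_sum1 (I : Type) (r : seq I) (G : I -> A) y :
  << (\sum_(i <- r) G i, y) >> =o \sum_(i <- r) << (G i, y) >>.
Proof. exact (linear_mod_sum (bilin_lin1 y) r G). Qed.

Lemma bilin_sum2 (I : Type) (r : seq I) x (G : I -> B) :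
  << (x, \sum_(i <- r) G i) >> =o \sum_(i <- r) << (x, G i) >>.
Proof. exact (linear_mod_sum (bilin_lin2 x) r G). Qed.

Lemma bilin_rel_lift (W : lmodType K) (Q : W -> Prop) (g : A -> B -> W) :
    (forall x x' y, eqmod Q (g (x + x') y) (g x y + g x' y)) ->
    (forall x y y', eqmod Q (g x (y + y')) (g x y + g x y')) ->
    (forall k x y, eqmod Q (g (k *: x) y) (k *: g x y)) ->
    (forall k x y, eqmod Q (g x (k *: y)) (k *: g x y)) ->
  forall w, bl w -> in_span Q (fglift (fun p => g p.1 p.2) w).
Proof.
have g_lin := fglift_is_linear (fun p : A * B => g p.1 p.2).
move=> gD1 gD2 gZ1 gZ2 w
  [[x [x' [y ->]]]|[x [y [y' ->]]]|[k [x [y ->]]]|[k [x [y ->]]]];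
  rewrite ?(is_linearB g_lin) ?(is_linearZ g_lin) !fgliftU1 /=.
- by have := gD1 x x' y; rewrite /eqmod opprD addrA.
- by have := gD2 x y y'; rewrite /eqmod opprD addrA.
- exact: gZ1.
- exact: gZ2.
Qed.

Lemma bilin_rel_lift0 (W : lmodType K) (g : A -> B -> W) :
    (forall x x' y, g (x + x') y = g x y + g x' y) ->
    (forall x y y', g x (y + y') = g x y + g x y') ->
    (forall k x y, g (k *: x) y = k *: g x y) ->
    (forall k x y, g x (k *: y) = k *: g x y) ->
  forall w, bl w -> fglift (fun p => g p.1 p.2) w = 0.
Proof.
have g_lin := fglift_is_linear (fun p : A * B => g p.1 p.2).
move=> gD1 gD2 gZ1 gZ2 w
  [[x [x' [y ->]]]|[x [y [y' ->]]]|[k [x [y ->]]]|[k [x [y ->]]]];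
  rewrite ?(is_linearB g_lin) ?(is_linearZ g_lin) !fgliftU1 /=.
- by rewrite gD1 addrAC addrK subrr.
- by rewrite gD2 addrAC addrK subrr.
- by rewrite gZ1 subrr.
- by rewrite gZ2 subrr.
Qed.

End BilinRel.

Section FiniteFamilies.
Variables (K : fieldType) (V : lmodType K).
Implicit Types (b d H : seq V) (y : V) (l : nat -> K).

Definition lcomb l b := \sum_(i < size b) l i *: b`_i.
Definition lin_indep b := forall l, lcomb l b = 0 -> forall i, (i < size b)%N -> l i = 0.
Definition in_lspan b y := exists l, y = lcomb l b.
Definition linear_on (S : V -> Prop) (f : V -> K) :=
  forall k y y', S y -> S y' -> f (k *: y + y') = k * f y + f y'.

Lemma lcombDZ b k l l' : lcomb (fun i => k * l i + l' i) b = k *: lcomb l b + lcomb l' b.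
Proof.
by rewrite /lcomb scaler_sumr -big_split; apply: eq_bigr => i _; rewrite scalerDl scalerA.
Qed.

Lemma lcombB b l l' : lcomb (fun i => l i - l' i) b = lcomb l b - lcomb l' b.
Proof. by rewrite /lcomb -sumrB; apply: eq_bigr => i _; rewrite scalerBl. Qed.

Lemma lcomb_rcons l b y : lcomb l (rcons b y) = lcomb l b + l (size b) *: y.
Proof.
rewrite /lcomb size_rcons big_ord_recr /= nth_rcons ltnn eqxx; congr (_ + _).
by apply: eq_bigr => i _; rewrite nth_rcons ltn_ord.
Qed.

Lemma lcomb_cat l b d : lcomb l (b ++ d) = lcomb l b + lcomb (fun i => l (size b + i)%N) d.
Proof.
rewrite /lcomb size_cat big_split_ord /=; congr (_ + _); apply: eq_bigr => i _.
  by rewrite nth_cat ltn_ord.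
by rewrite nth_cat ltnNge leq_addr /= addKn.
Qed.

Lemma sum_delta n (F : nat -> V) i : (i < n)%N -> \sum_(j < n) (j == i :> nat)%:R *: F j = F i.
Proof.
move=> i_n; rewrite (bigD1 (Ordinal i_n)) //= eqxx scale1r big1 ?addr0 // => j ji.
by rewrite (_ : (j == i :> nat) = false) ?scale0r //; apply: contraNF ji => /eqP ji; apply/eqP/val_inj.
Qed.

Lemma lcomb_delta b i : (i < size b)%N -> lcomb (fun j => (j == i)%:R) b = b`_i.
Proof. exact: sum_delta. Qed.

Lemma lin_indep_inj b l l' : lin_indep b -> lcomb l b = lcomb l' b ->
  forall i, (i < size b)%N -> l i = l' i.
Proof.
move=> indep_b ll' i ib; apply/eqP; rewrite -subr_eq0; apply/eqP.
by apply: (indep_b (fun i => l i - l' i)) => //; rewrite lcombB ll' subrr.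
Qed.

Lemma in_lspan_nth b i : (i < size b)%N -> in_lspan b b`_i.
Proof. by move=> ib; exists (fun j => (j == i)%:R); rewrite lcomb_delta. Qed.

Lemma in_lspan0 b : in_lspan b 0.
Proof. by exists (fun=> 0); rewrite /lcomb big1 // => i _; rewrite scale0r. Qed.

Lemma in_lspanDZ b k y y' : in_lspan b y -> in_lspan b y' -> in_lspan b (k *: y + y').
Proof. by move=> [l ->] [l' ->]; exists (fun i => k * l i + l' i); rewrite lcombDZ. Qed.

Lemma in_lspan_catl b d y : in_lspan b y -> in_lspan (b ++ d) y.
Proof.
move=> [l ->]; exists (fun i => if (i < size b)%N then l i else 0).
rewrite lcomb_cat [X in _ + X]big1 ?addr0 => [|i _]; last first.
  by rewrite ltnNge leq_addr scale0r.
by apply: eq_bigr => i _; rewrite ltn_ord.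
Qed.

Lemma in_lspan_catr b d y : in_lspan d y -> in_lspan (b ++ d) y.
Proof.
move=> [l ->]; exists (fun i => if (i < size b)%N then 0 else l (i - size b)%N).
rewrite lcomb_cat [lcomb _ b]big1 ?add0r => [|i _]; last by rewrite ltn_ord scale0r.
by apply: eq_bigr => i _; rewrite ltnNge leq_addr /= addKn.
Qed.

Lemma in_lspan_trans b d y :
  in_lspan b y -> (forall i, (i < size b)%N -> in_lspan d b`_i) -> in_lspan d y.
Proof.
move=> [l ->] bd; rewrite /lcomb; elim/big_rec: _ => [|i x _ dx]; first exact: in_lspan0.
by apply: in_lspanDZ => //; apply: bd.
Qed.

Lemma lin_indep_rcons b y : lin_indep b -> ~ in_lspan b y -> lin_indep (rcons b y).
Proof.
move=> indep_b y_out l; rewrite lcomb_rcons => l0.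
have ly0 : l (size b) = 0.
  have [//|ly_neq0] := eqVneq (l (size b)) 0; case: y_out.
  exists (fun i => - l i / l (size b)); apply: (scalerI ly_neq0).
  have -> : l (size b) *: y = - lcomb l b by apply/eqP; rewrite -addr_eq0 addrC l0.
  rewrite /lcomb scaler_sumr -sumrN; apply: eq_bigr => i _.
  by rewrite scalerA mulrCA mulfV // mulr1 scaleNr.
move=> i; rewrite size_rcons ltnS leq_eqVlt => /orP[/eqP -> //|ib].
by apply: (indep_b l) => //; move: l0; rewrite ly0 scale0r addr0.
Qed.

Lemma lin_indep_complete b H : lin_indep b ->
  exists d, lin_indep (b ++ d) /\ forall y, in_lspan (b ++ H) y -> in_lspan (b ++ d) y.
Proof.
elim/last_ind: H => [|H h IH] indep_b; first by exists [::]; rewrite cats0.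
have [d [indep_bd spanH]] := IH indep_b.
have spanH_nth i : (i < size (b ++ H))%N -> in_lspan (b ++ d) (b ++ H)`_i.
  by move=> iH; apply/spanH/in_lspan_nth.
have [h_in|h_out] := classic (in_lspan (b ++ d) h).
  exists d; split=> // y /in_lspan_trans; apply=> i; rewrite -rcons_cat size_rcons ltnS.
  rewrite leq_eqVlt nth_rcons => /orP[/eqP ->|iH]; first by rewrite ltnn eqxx.
  by rewrite iH; apply: spanH_nth.
exists (rcons d h); rewrite -!rcons_cat; split; first exact: lin_indep_rcons.
move=> y /in_lspan_trans; apply=> i; rewrite size_rcons ltnS leq_eqVlt nth_rcons.
case/orP=> [/eqP ->|iH].
  rewrite ltnn eqxx; have := @in_lspan_nth (rcons (b ++ d) h) (size (b ++ d)).
  by rewrite size_rcons nth_rcons ltnn eqxx; apply.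
by rewrite iH -cats1; apply/in_lspan_catl/spanH_nth.
Qed.

Definition coord b y : nat -> K :=
  if excluded_middle_informative (in_lspan b y) is left y_in then
    proj1_sig (constructive_indefinite_description _ y_in)
  else fun=> 0.

Lemma coordP b y : in_lspan b y -> y = lcomb (coord b y) b.
Proof.
rewrite /coord; case: excluded_middle_informative => // y_in _.
by case: constructive_indefinite_description.
Qed.

Lemma coord_lcomb b l : lin_indep b ->
  forall i, (i < size b)%N -> coord b (lcomb l b) i = l i.
Proof.
move=> indep_b; apply: lin_indep_inj => //.
by rewrite -coordP //; exists l.
Qed.

Lemma exists_coord_functional b H i : lin_indep b -> (i < size b)%N ->
  exists f, linear_on (in_lspan (b ++ H)) f /\
            forall j, (j < size b)%N -> f b`_j = (j == i)%:R.
Proof.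
move=> indep_b ib; have [d [indep_bd spanH]] := lin_indep_complete H indep_b.
have ibd : (i < size (b ++ d))%N by rewrite size_cat ltn_addr.
exists (fun y => coord (b ++ d) y i); split.
  move=> k y y' /spanH/coordP ey /spanH/coordP ey'.
  by rewrite {1}ey {1}ey' -lcombDZ coord_lcomb.
move=> j jb; have jbd : (j < size (b ++ d))%N by rewrite size_cat ltn_addr.
have -> : b`_j = (b ++ d)`_j by rewrite nth_cat jb.
by rewrite -lcomb_delta // coord_lcomb // eq_sym.
Qed.

End FiniteFamilies.

Section TensorOverField.
Variables (K : fieldType) (A : lmodType K).
Local Notation FA := {freeg (A * A)%type / K}.
Local Notation bl := (@bilin_rel K A A).
Local Notation "u =o v" := (eqmod bl u v) (at level 70).

Definition contract2 (f : A -> K) (w : FA) : A := fglift (fun p : A * A => f p.2 *: p.1) w.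

Lemma tensor_indep_repr (w : FA) : exists al be : seq A,
  [/\ size al = size be, lin_indep be &
      w =o \sum_(i < size be) << (al`_i, be`_i) >>].
Proof.
have [l ->] := freeg_lcomb_repr w; elim: l => [|[k [a b]] l [al [be [size_ab indep_be IH]]]].
  exists [::], [::]; split=> [//|l _ i //|]; rewrite big_nil big_ord0; exact: eqmod_refl.
rewrite big_cons /=; have [[c ->]|b_out] := classic (in_lspan be b).
  exists [seq al`_i + (k * c i) *: a | i <- iota 0 (size be)], be.
  rewrite size_map size_iota; split=> //.
  apply: eqmod_trans; first exact: (eqmodD (eqmod_refl _ _) IH).
  rewrite /lcomb; apply: eqmod_trans.
    exact: eqmodD (eqmodZ k (bilin_sum2 _ _ _)) (eqmod_refl _ _).
  rewrite scaler_sumr -big_split /=; apply: eqmod_sum => i _.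
  rewrite (nth_map 0%N) ?size_iota // nth_iota // add0n; apply: eqmod_sym.
  apply: eqmod_trans (bilinD1 _ _ _) _; rewrite addrC; apply: eqmodD (eqmod_refl _ _) _.
  rewrite -scalerA; apply: eqmod_trans (bilinZ1 _ _ _) _.
  by apply/eqmodZ/eqmod_trans/eqmod_sym/bilinZ2; apply: bilinZ1.
exists (rcons al (k *: a)), (rcons be b); rewrite !size_rcons size_ab.
split=> //; first exact: lin_indep_rcons.
rewrite big_ord_recr /= addrC !nth_rcons size_ab ltnn eqxx; apply: eqmodD.
  by apply: eqmod_sym; apply: bilinZ1.
apply: eqmod_trans IH _.
under eq_bigr do rewrite !nth_rcons size_ab ltn_ord.
exact: eqmod_refl.
Qed.

Lemma bilin_rel_contract (v : FA) : bl v ->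
  exists H, forall f, linear_on (in_lspan H) f -> contract2 f v = 0.
Proof.
have c_lin f := fglift_is_linear (fun p : A * A => f p.2 *: p.1).
case=> [[x [x' [y ->]]]|[x [y [y' ->]]]|[k [x [y ->]]]|[k [x [y ->]]]].
- exists [::] => f _; rewrite /contract2 !(is_linearB (c_lin f)) !fgliftU1 /=.
  by rewrite scalerDr addrAC addrK subrr.
- exists [:: y; y'] => f f_lin; rewrite /contract2 !(is_linearB (c_lin f)) !fgliftU1 /=.
  have := f_lin 1 y y'; rewrite scale1r mul1r => -> //.
    by rewrite scalerDl addrAC addrK subrr.
  + exact: (@in_lspan_nth _ _ [:: y; y'] 0).
  + exact: (@in_lspan_nth _ _ [:: y; y'] 1).
- exists [::] => f _; rewrite /contract2 (is_linearB (c_lin f)) (is_linearZ (c_lin f)).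
  by rewrite !fgliftU1 /= scalerA mulrC -scalerA subrr.
- exists [:: y] => f f_lin; rewrite /contract2 (is_linearB (c_lin f)) (is_linearZ (c_lin f)).
  have y_in : in_lspan [:: y] y by exact: (@in_lspan_nth _ _ [:: y] 0).
  have f0 : f 0 = 0.
    have := f_lin 1 0 0 (in_lspan0 _) (in_lspan0 _).
    by rewrite scale1r addr0 mul1r => /(congr1 (fun z => z - f 0)); rewrite subrr addrK.
  have := f_lin k y 0 y_in (in_lspan0 _); rewrite addr0 f0 addr0.
  by rewrite !fgliftU1 /= => ->; rewrite scalerA subrr.
Qed.

Lemma bilin_span_contract (w : FA) : in_span bl w ->
  exists H, forall f, linear_on (in_lspan H) f -> contract2 f w = 0.
Proof.
have c_lin f := fglift_is_linear (fun p : A * A => f p.2 *: p.1).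
elim/span_ind => [|k v w' /bilin_rel_contract[H1 H1v] [H2 H2w]].
  by exists [::] => f _; exact: is_linear0 (c_lin f).
exists (H1 ++ H2) => f f_lin; rewrite /contract2 c_lin -/(contract2 f _) -/(contract2 f _).
rewrite H1v ?H2w ?scaler0 ?addr0 // => c y y' y_in y'_in; apply: f_lin.
- exact: in_lspan_catr.
- exact: in_lspan_catr.
- exact: in_lspan_catl.
- exact: in_lspan_catl.
Qed.

Variable mA : A -> A -> A.
Hypothesis mA_linl : forall c, is_linear (fun a => mA a c).
Hypothesis mA_nondeg : right_nondegenerate mA.

Lemma act_left_bilin c w : bl w -> in_span bl (act_left mA c w).
Proof.
apply: (bilin_rel_lift (g := fun x y => << (mA x c, y) >>)) => *.
- by rewrite (is_linearD (mA_linl c)); apply: bilinD1.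
- exact: bilinD2.
- by rewrite (is_linearZ (mA_linl c)); apply: bilinZ1.
- exact: bilinZ2.
Qed.

Lemma bilin_nondegenerate_left w :
  (forall c, in_span bl (act_left mA c w)) -> in_span bl w.
Proof.
move=> w_c; have [al [be [size_ab indep_be w_ab]]] := tensor_indep_repr w.
suff al0 i : (i < size be)%N -> al`_i = 0.
  apply: eqmod_span w_ab _; apply: span_sum => i _.
  by rewrite al0 //; apply/eqmod0; exact (linear_mod0 (bilin_lin1 _)).
move=> ib; apply: mA_nondeg => c.
have /bilin_span_contract[H Hw] : in_span bl (act_left mA c (\sum_(i < size be) << (al`_i, be`_i) >>)).
  apply: eqmod_span (w_c c); apply: eqmod_map (eqmod_sym w_ab) => [|v /act_left_bilin//].
  exact: fglift_is_linear.
have [f [f_lin f_be]] := exists_coord_functional H indep_be ib.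
have := Hw f (fun k y y' y_in y'_in => f_lin k y y' (in_lspan_catr _ y_in) (in_lspan_catr _ y'_in)).
rewrite /contract2 /act_left fglift_comp (is_linear_sum (fglift_is_linear _)).
by under eq_bigr do rewrite fgliftU1 /= fgliftU1 /= f_be ?ltn_ord //; rewrite (sum_delta (fun j => mA al`_j c)).
Qed.

Definition swap_tensor (w : FA) : FA := fglift (fun p : A * A => << (p.2, p.1) >>) w.

Lemma swap_tensor_bilin w : bl w -> in_span bl (swap_tensor w).
Proof.
apply: (bilin_rel_lift (g := fun x y => << (y, x) >>)) => *.
- exact: bilinD2.
- exact: bilinD1.
- exact: bilinZ2.
- exact: bilinZ1.
Qed.

Lemma swap_tensorK w : swap_tensor (swap_tensor w) = w.
Proof.
have [l ->] := freeg_lcomb_repr w; rewrite /swap_tensor !fglift_sumZ.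
by apply: eq_bigr => -[k []].
Qed.

Lemma swap_tensor_act c w : swap_tensor (act_right mA c w) = act_left mA c (swap_tensor w).
Proof.
have [l ->] := freeg_lcomb_repr w.
by rewrite /swap_tensor /act_right /act_left !fglift_sumZ.
Qed.

Lemma bilin_nondegenerate_right w :
  (forall c, in_span bl (act_right mA c w)) -> in_span bl w.
Proof.
have swap_span := span_map (fglift_is_linear _) swap_tensor_bilin.
move=> w_c; rewrite -[w]swap_tensorK; apply/swap_span/bilin_nondegenerate_left => c.
by rewrite -swap_tensor_act; apply/swap_span/w_c.
Qed.

End TensorOverField.

Lemma tensor_nondegenerate_of_local_units (K : fieldType) (A B : lmodType K)
    (mA : A -> A -> A) (s t : B -> A -> A) :
  right_local_units mA -> tensor_nondegenerate mA s t.
Proof.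
move=> units; split=> w w_c; have [l w_l] := freeg_lcomb_repr w.
- have [e e_unit] := units [seq p.2.1 | p <- l]; have := w_c e.
  rewrite w_l /act_left fglift_sumZ; congr in_span; apply: eq_big_seq => -[k [a b]] pl.
  by rewrite /= e_unit //; apply: (map_f (fun p : K * (A * A) => p.2.1) pl).
- have [e e_unit] := units [seq p.2.2 | p <- l]; have := w_c e.
  rewrite w_l /act_right fglift_sumZ; congr in_span; apply: eq_big_seq => -[k [a b]] pl.
  by rewrite /= e_unit //; apply: (map_f (fun p : K * (A * A) => p.2.2) pl).
Qed.

Section Balanced.
Variables (K : fieldType) (A B : lmodType K) (mA : A -> A -> A) (mB : B -> B -> B)
  (s t : B -> A -> A).
Hypotheses (mA_alg : is_algebra mA) (mB_alg : is_algebra mB)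
  (s_hom : mult_hom mB mA s) (t_antihom : mult_antihom mB mA t).
Local Notation FA := {freeg (A * A)%type / K}.
Local Notation bl := (@bilin_rel K A A).
Local Notation bal := (bal_rel s t).
Local Notation "u =o v" := (eqmod bl u v) (at level 70).
Local Notation "u =b v" := (eqmod bal u v) (at level 70).

Lemma mA_linear_l c : is_linear (fun a => mA a c).
Proof. by case: mA_alg. Qed.
Lemma mB_assoc x y z : mB x (mB y z) = mB (mB x y) z.
Proof. by case: mB_alg. Qed.
Lemma s_is_linear x : is_linear (s x).
Proof. by case: s_hom => /(_ x) [[]]. Qed.
Lemma t_is_linear x : is_linear (t x).
Proof. by case: t_antihom => /(_ x) [[]]. Qed.
Lemma s_mulA x a b : s x (mA a b) = mA (s x a) b.
Proof. by case: s_hom => /(_ x) [[]]. Qed.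
Lemma t_mulA x a b : t x (mA a b) = mA (t x a) b.
Proof. by case: t_antihom => /(_ x) [[]]. Qed.
Lemma s_morph x y a : s (mB x y) a = s x (s y a).
Proof. by case: s_hom. Qed.
Lemma t_morph x y a : t (mB x y) a = t y (t x a).
Proof. by case: t_antihom. Qed.
Lemma s_linear_in a : is_linear (fun x => s x a).
Proof. by case: s_hom => _ s_lin _ k x y; apply: s_lin. Qed.
Lemma t_linear_in a : is_linear (fun x => t x a).
Proof. by case: t_antihom => _ t_lin _ k x y; apply: t_lin. Qed.

Lemma bilin_bal w : bl w -> in_span bal w.
Proof. by move=> bl_w; apply: span_gen; left. Qed.

Lemma eqmod_bilin_bal u v : u =o v -> u =b v.
Proof. exact/span_mono/bilin_bal. Qed.

Lemma bal_swap x a b : << (s x a, b) >> =b << (a, t x b) >>.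
Proof. by apply: span_gen; right; exists x, a, b. Qed.

Definition right_dual_pair (r : (A -> B) * (B -> A)) :=
  [/\ is_linear r.1, is_linear r.2,
      forall x a, r.1 (t x a) = mB (r.1 a) x &
      forall x b, r.2 (mB b x) = t x (r.2 b)].
Definition left_dual_pair (r : (A -> B) * (B -> A)) :=
  [/\ is_linear r.1, is_linear r.2,
      forall x a, r.1 (s x a) = mB x (r.1 a) &
      forall x b, r.2 (mB x b) = s x (r.2 b)].

(* For dual basis elements r = (phi_i, m_i), r' = (psi_j, n_j), [pair_legs] is the
   element w_ij of B (x) B and [pair_rebuild] its image y (x) z |-> n_j z (x) m_i y. *)
Definition pair_legs (r r' : (A -> B) * (B -> A)) (w : FA) : {freeg (B * B)%type / K} :=
  fglift (fun p : A * A => << (r.1 p.2, r'.1 p.1) >>) w.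
Definition pair_rebuild (r r' : (A -> B) * (B -> A)) (w : FA) : FA :=
  fglift (fun p : A * A => << (r'.2 (r'.1 p.1), r.2 (r.1 p.2)) >>) w.

Lemma pair_rebuild_bal r r' w : firm mB -> right_dual_pair r -> left_dual_pair r' ->
  mu mB (pair_legs r r' w) = 0 -> in_span bal (pair_rebuild r r' w).
Proof.
move=> [_ firm_inj] [r1_lin r2_lin r1_t r2_t] [r'1_lin r'2_lin r'1_s r'2_s] /firm_inj.
pose Theta := fglift (fun q : B * B => << (r'.2 q.2, r.2 q.1) >> : FA).
have -> : pair_rebuild r r' w = Theta (pair_legs r r' w).
  by rewrite /Theta /pair_legs fglift_comp; apply: eq_fglift => p; rewrite fgliftU1.
apply: span_map; first exact: fglift_is_linear.
move=> v [bl_v|[x [y [z ->]]]].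
- apply: (bilin_rel_lift (g := fun q1 q2 => << (r'.2 q2, r.2 q1) >>)) bl_v => *.
  + by rewrite (is_linearD r2_lin); apply/eqmod_bilin_bal/bilinD2.
  + by rewrite (is_linearD r'2_lin); apply/eqmod_bilin_bal/bilinD1.
  + by rewrite (is_linearZ r2_lin); apply/eqmod_bilin_bal/bilinZ2.
  + by rewrite (is_linearZ r'2_lin); apply/eqmod_bilin_bal/bilinZ1.
- rewrite /Theta (is_linearB (fglift_is_linear _)) !fgliftU1 /= r2_t r'2_s -opprB.
  by apply/spanN/span_gen; right; exists y, (r'.2 z), (r.2 x).
Qed.

Lemma dual_basis_expand (l : seq (K * (A * A))) (R L : seq ((A -> B) * (B -> A))) :
    (forall p, p \in l -> \sum_(r <- R) r.2 (r.1 p.2.2) = p.2.2) ->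
    (forall p, p \in l -> \sum_(r' <- L) r'.2 (r'.1 p.2.1) = p.2.1) ->
  let w := \sum_(p <- l) p.1 *: << p.2 >> in
  w =o \sum_(r <- R) \sum_(r' <- L) pair_rebuild r r' w.
Proof.
move=> R_id L_id w; rewrite /w /pair_rebuild.
under [X in _ =o X]eq_bigr do under eq_bigr do rewrite fglift_sumZ.
under [X in _ =o X]eq_bigr do rewrite exchange_big /=.
rewrite [X in _ =o X]exchange_big /=; apply: eqmod_sum => -[k [a b]] /In_mem pl /=.
under eq_bigr do rewrite -scaler_sumr.
rewrite -scaler_sumr; apply: eqmodZ.
have /= a_id := L_id _ pl; have /= b_id := R_id _ pl.
rewrite -{1}a_id -{1}b_id; apply: eqmod_trans (bilin_sum2 _ _ _) _.
apply: eqmod_sum => r _; exact: bilin_sum1.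
Qed.

Lemma mu_pair_legs_left r r' w : left_dual_pair r' ->
  mu mB (pair_legs r r' w) = r'.1 (fglift (fun p : A * A => s (r.1 p.2) p.1) w).
Proof.
case=> r'1_lin _ r'1_s _; rewrite (linear_fglift _ _ r'1_lin) /mu /pair_legs fglift_comp.
by apply: eq_fglift => p; rewrite fgliftU1 r'1_s.
Qed.

Lemma mu_pair_legs_right r r' w : right_dual_pair r ->
  mu mB (pair_legs r r' w) = r.1 (fglift (fun p : A * A => t (r'.1 p.1) p.2) w).
Proof.
case=> r1_lin _ r1_t _; rewrite (linear_fglift _ _ r1_lin) /mu /pair_legs fglift_comp.
by apply: eq_fglift => p; rewrite fgliftU1 r1_t.
Qed.

Hypothesis mA_nondeg : right_nondegenerate mA.

Lemma right_pair_contract_eq0 r w : right_dual_pair r ->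
    (forall c, in_span bal (act_left mA c w)) ->
  fglift (fun p : A * A => s (r.1 p.2) p.1) w = 0.
Proof.
move=> [r1_lin _ r1_t _] w_c; set Psi := fglift _.
have Psi_lin : is_linear Psi by apply: fglift_is_linear.
have Psi_bal v : bal v -> Psi v = 0.
  case=> [bl_v|[x [a [b ->]]]].
  - apply: (bilin_rel_lift0 (g := fun a b => s (r.1 b) a)) bl_v => *.
    + exact: (is_linearD (s_is_linear _)).
    + by rewrite (is_linearD r1_lin) (is_linearD (s_linear_in _)).
    + exact: (is_linearZ (s_is_linear _)).
    + by rewrite (is_linearZ r1_lin) (is_linearZ (s_linear_in _)).
  - by rewrite (is_linearB Psi_lin) /Psi !fgliftU1 /= r1_t s_morph subrr.
apply: mA_nondeg => c; rewrite (linear_fglift _ _ (mA_linear_l c)).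
rewrite -(linear_span_eq0 Psi_lin Psi_bal (w_c c)) /Psi /act_left fglift_comp.
by apply: eq_fglift => p; rewrite fgliftU1 s_mulA.
Qed.

Lemma left_pair_contract_eq0 r' w : left_dual_pair r' ->
    (forall c, in_span bal (act_right mA c w)) ->
  fglift (fun p : A * A => t (r'.1 p.1) p.2) w = 0.
Proof.
move=> [r'1_lin _ r'1_s _] w_c; set Psi := fglift _.
have Psi_lin : is_linear Psi by apply: fglift_is_linear.
have Psi_bal v : bal v -> Psi v = 0.
  case=> [bl_v|[x [a [b ->]]]].
  - apply: (bilin_rel_lift0 (g := fun a b => t (r'.1 a) b)) bl_v => *.
    + by rewrite (is_linearD r'1_lin) (is_linearD (t_linear_in _)).
    + exact: (is_linearD (t_is_linear _)).
    + by rewrite (is_linearZ r'1_lin) (is_linearZ (t_linear_in _)).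
    + exact: (is_linearZ (t_is_linear _)).
  - by rewrite (is_linearB Psi_lin) /Psi !fgliftU1 /= r'1_s t_morph subrr.
apply: mA_nondeg => c; rewrite (linear_fglift _ _ (mA_linear_l c)).
rewrite -(linear_span_eq0 Psi_lin Psi_bal (w_c c)) /Psi /act_right fglift_comp.
by apply: eq_fglift => p; rewrite fgliftU1 t_mulA.
Qed.

Lemma tensor_nondegenerate_of_firm : firm mB -> left_locally_projective mB s ->
  right_locally_projective mB t -> tensor_nondegenerate mA s t.
Proof.
move=> firm_B lproj rproj.
have rebuild w : (forall r r', right_dual_pair r -> left_dual_pair r' ->
    mu mB (pair_legs r r' w) = 0) -> in_span bal w.
  move=> legs0; have [l w_l] := freeg_lcomb_repr w.
  have [R [R_pair R_id]] := rproj [seq p.2.2 | p <- l].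
  have [L [L_pair L_id]] := lproj [seq p.2.1 | p <- l].
  have /eqmod_bilin_bal/eqmod_span : w =o \sum_(r <- R) \sum_(r' <- L) pair_rebuild r r' w.
    rewrite w_l; apply: dual_basis_expand => p pl.
      by apply/R_id/(map_f (fun p : K * (A * A) => p.2.2) pl).
    by apply/L_id/(map_f (fun p : K * (A * A) => p.2.1) pl).
  apply; apply: span_sum => r /R_pair r_pair; apply: span_sum => r' /L_pair r'_pair.
  exact: pair_rebuild_bal (legs0 _ _ r_pair r'_pair).
split=> w w_c; apply: rebuild => r r' r_pair r'_pair.
- rewrite mu_pair_legs_left // right_pair_contract_eq0 //.
  by case: r'_pair => r'1_lin *; apply: is_linear0 r'1_lin.
- rewrite mu_pair_legs_right // left_pair_contract_eq0 //.
  by case: r_pair => r1_lin *; apply: is_linear0 r1_lin.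
Qed.


Local Notation FB := {freeg (B * B)%type / K}.
Local Notation "u =B v" := (eqmod (@bilin_rel K B B) u v) (at level 70).

Definition rmul_x1 (x : B) (u : FB) : FB := fglift (fun q : B * B => << (mB q.1 x, q.2) >>) u.
Definition rmul_1x (z : B) (u : FB) : FB := fglift (fun q : B * B => << (q.1, mB z q.2) >>) u.

Lemma mulT_rmul_x1 x u e : mulT mB (rmul_x1 x u) e = mulT mB u (lmul_x1 mB x e).
Proof.
have [l ->] := freeg_lcomb_repr u; have [l' ->] := freeg_lcomb_repr e.
rewrite /mulT /rmul_x1 /lmul_x1 !fglift_sumZ; apply: eq_bigr => p _; congr (_ *: _).
by rewrite !fglift_sumZ; apply: eq_bigr => q _ /=; rewrite mB_assoc.
Qed.

Lemma mulT_rmul_1x z u e : mulT mB (rmul_1x z u) e = mulT mB u (lmul_1x mB z e).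
Proof.
have [l ->] := freeg_lcomb_repr u; have [l' ->] := freeg_lcomb_repr e.
rewrite /mulT /rmul_1x /lmul_1x !fglift_sumZ; apply: eq_bigr => p _; congr (_ *: _).
by rewrite !fglift_sumZ; apply: eq_bigr => q _ /=; rewrite mB_assoc.
Qed.

Lemma lmul_x1_1xC x z e : lmul_x1 mB x (lmul_1x mB z e) = lmul_1x mB z (lmul_x1 mB x e).
Proof. by have [l ->] := freeg_lcomb_repr e; rewrite /lmul_x1 /lmul_1x !fglift_sumZ. Qed.

Lemma lmul_1x_mul x y e : lmul_1x mB x (lmul_1x mB y e) = lmul_1x mB (mB y x) e.
Proof.
have [l ->] := freeg_lcomb_repr e; rewrite /lmul_1x !fglift_sumZ.
by apply: eq_bigr => q _ /=; rewrite mB_assoc.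
Qed.

(* [mact a b u] is [u] acting on [a (x) b] through [y (x) z^op |-> s(y) (x) t(z)]. *)
Definition mact (a b : A) (u : FB) : FA :=
  fglift (fun q : B * B => << (s q.1 a, t q.2 b) >>) u.

Lemma mact_eqmod a b u u' : u =B u' -> mact a b u =o mact a b u'.
Proof.
apply: eqmod_map; first exact: fglift_is_linear.
apply: (bilin_rel_lift (g := fun y z => << (s y a, t z b) >>)) => *.
- by rewrite (is_linearD (s_linear_in a)); apply: bilinD1.
- by rewrite (is_linearD (t_linear_in b)); apply: bilinD2.
- by rewrite (is_linearZ (s_linear_in a)); apply: bilinZ1.
- by rewrite (is_linearZ (t_linear_in b)); apply: bilinZ2.
Qed.

Lemma mact_linear1 b u k a a' : mact (k *: a + a') b u =o k *: mact a b u + mact a' b u.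
Proof.
have [l ->] := freeg_lcomb_repr u; rewrite /mact !fglift_sumZ scaler_sumr -big_split.
apply: eqmod_sum => p _ /=; rewrite (s_is_linear _) scalerA mulrC -scalerA -scalerDr.
exact/eqmodZ/bilin_lin1.
Qed.

Lemma mact_linear2 a u k b b' : mact a (k *: b + b') u =o k *: mact a b u + mact a b' u.
Proof.
have [l ->] := freeg_lcomb_repr u; rewrite /mact !fglift_sumZ scaler_sumr -big_split.
apply: eqmod_sum => p _ /=; rewrite (t_is_linear _) scalerA mulrC -scalerA -scalerDr.
exact/eqmodZ/bilin_lin2.
Qed.

Lemma mact_rmul_x1 x a b u : mact a b (rmul_x1 x u) = mact (s x a) b u.
Proof. by rewrite /mact /rmul_x1 fglift_comp; apply: eq_fglift => q; rewrite fgliftU1 /= s_morph. Qed.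

Lemma mact_rmul_1x z a b u : mact a b (rmul_1x z u) = mact a (t z b) u.
Proof. by rewrite /mact /rmul_1x fglift_comp; apply: eq_fglift => q; rewrite fgliftU1 /= t_morph. Qed.

Lemma mact_mulTU y z a b u : mact a b (mulT mB u << (y, z) >>) = mact (s y a) (t z b) u.
Proof.
have -> : mulT mB u << (y, z) >> = fglift (fun q => << (mB q.1 y, mB z q.2) >>) u.
  by apply: eq_fglift => q; rewrite fgliftU1.
by rewrite /mact fglift_comp; apply: eq_fglift => q; rewrite fgliftU1 /= s_morph t_morph.
Qed.

Hypotheses (s_faithful : faithful_idempotent s) (t_faithful : faithful_idempotent t).

(* Since s(B)A = A = t(B)A, the action on [A (x) A] of an element of
   [B (x) B^op] only depends on the multiplier it defines. *)
Lemma mact_multiplier u u' : (forall e, mulT mB u e =B mulT mB u' e) ->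
  forall a b, mact a b u =o mact a b u'.
Proof.
move=> uu' a b; have [[_ s_onto] [_ t_onto]] := (s_faithful, t_faithful).
have [la ->] := s_onto a; have [lb ->] := t_onto b.
have expand v : mact (\sum_(p <- la) s p.1 p.2) (\sum_(q <- lb) t q.1 q.2) v =o
    \sum_(p <- la) \sum_(q <- lb) mact p.2 q.2 (mulT mB v << (p.1, q.1) >>).
  apply: eqmod_trans (linear_mod_sum (mact_linear1 _ v) _ _) _; apply: eqmod_sum => p _.
  apply: eqmod_trans (linear_mod_sum (mact_linear2 _ v) _ _) _; apply: eqmod_sum => q _.
  by rewrite mact_mulTU; apply: eqmod_refl.
apply: eqmod_trans (expand u) (eqmod_sym (eqmod_trans (expand u') _)).
by apply: eqmod_sum => p _; apply: eqmod_sum => q _; apply/mact_eqmod/eqmod_sym.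
Qed.

Variable T : FB -> FB.
Hypothesis T_sep : left_separability_multiplier mB T.

Lemma sep_spec x : exists d, [/\ forall e, T (lmul_x1 mB x e) =B mulT mB d e,
  forall e, T (lmul_1x mB x e) =B mulT mB d e & mu_op mB d = x].
Proof. by case: T_sep => _ _ _ _; apply. Qed.

(* [sep x] represents E(x (x) 1) = E(1 (x) x^op). *)
Definition sep x : FB := proj1_sig (constructive_indefinite_description _ (sep_spec x)).

Lemma sepP x : [/\ forall e, T (lmul_x1 mB x e) =B mulT mB (sep x) e,
  forall e, T (lmul_1x mB x e) =B mulT mB (sep x) e & mu_op mB (sep x) = x].
Proof. by rewrite /sep; case: constructive_indefinite_description. Qed.

Lemma mact_sep_rmulC x z a b :
  mact a b (rmul_1x z (sep x)) =o mact a b (rmul_x1 x (sep z)).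
Proof.
apply: mact_multiplier => e; rewrite mulT_rmul_1x mulT_rmul_x1.
have [sep_x1 _ _] := sepP x; have [_ sep_1x _] := sepP z.
by apply: eqmod_trans (eqmod_sym (sep_x1 _)) _; rewrite lmul_x1_1xC; apply: sep_1x.
Qed.

Lemma mact_sep_mul z x a b : mact a b (sep (mB z x)) =o mact a b (rmul_1x z (sep x)).
Proof.
apply: mact_multiplier => e; rewrite mulT_rmul_1x.
have [_ sep_zx _] := sepP (mB z x); have [_ sep_x _] := sepP x.
by apply: eqmod_trans (eqmod_sym (sep_zx _)) _; rewrite -lmul_1x_mul; apply: sep_x.
Qed.

(* The identity E(x (x) 1)(1 (x) z^op) = E(z (x) 1)(x (x) 1) moves s(x) from
   one factor to the other: this is why the lift below is well defined. *)
Lemma mact_sep_sum (D lb : seq (B * A)) b : b = \sum_(j <- lb) t j.1 j.2 ->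
  \sum_(q <- D) mact q.2 b (sep q.1) =o
  \sum_(j <- lb) mact (\sum_(q <- D) s q.1 q.2) j.2 (sep j.1).
Proof.
move=> ->; have split_a j : mact (\sum_(q <- D) s q.1 q.2) j.2 (sep j.1) =o
    \sum_(q <- D) mact (s q.1 q.2) j.2 (sep j.1).
  exact (linear_mod_sum (mact_linear1 j.2 (sep j.1)) D (fun q => s q.1 q.2)).
apply: eqmod_trans (eqmod_sym (eqmod_sum (fun j _ => split_a j))).
rewrite exchange_big /=; apply: eqmod_sum => q _.
apply: eqmod_trans (linear_mod_sum (mact_linear2 _ _) _ _) _; apply: eqmod_sum => j _.
by rewrite -mact_rmul_1x -mact_rmul_x1; apply: mact_sep_rmulC.
Qed.

Definition sdecomp a : seq (B * A) :=
  proj1_sig (constructive_indefinite_description _ (s_faithful.2 a)).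

Lemma sdecompE a : a = \sum_(q <- sdecomp a) s q.1 q.2.
Proof. by rewrite /sdecomp; case: constructive_indefinite_description. Qed.

Definition lift_gen a b : FA := \sum_(q <- sdecomp a) mact q.2 b (sep q.1).
Definition sep_lift (w : FA) : FA := fglift (fun p : A * A => lift_gen p.1 p.2) w.

Lemma lift_gen_repr (D : seq (B * A)) a b : \sum_(q <- D) s q.1 q.2 = a ->
  lift_gen a b =o \sum_(q <- D) mact q.2 b (sep q.1).
Proof.
move=> D_a; have [lb b_lb] := t_faithful.2 b.
apply: eqmod_trans (mact_sep_sum _ b_lb) _.
by rewrite -sdecompE -D_a; apply/eqmod_sym/mact_sep_sum.
Qed.

Lemma lift_gen_linear1 b k a a' : lift_gen (k *: a + a') b =o k *: lift_gen a b + lift_gen a' b.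
Proof.
pose D := [seq (q.1, k *: q.2) | q <- sdecomp a] ++ sdecomp a'.
apply: eqmod_trans (lift_gen_repr (D := D) _ _) _.
  rewrite /D big_cat big_map /= -sdecompE {2}(sdecompE a) scaler_sumr; congr (_ + _).
  by apply: eq_bigr => q _; rewrite (is_linearZ (s_is_linear _)).
rewrite /D big_cat big_map /lift_gen scaler_sumr; apply: eqmodD (eqmod_refl _ _).
apply: eqmod_sum => q _; exact (linear_modZ (mact_linear1 b (sep q.1)) k q.2).
Qed.

Lemma lift_gen_linear2 a k b b' : lift_gen a (k *: b + b') =o k *: lift_gen a b + lift_gen a b'.
Proof.
by rewrite /lift_gen scaler_sumr -big_split; apply: eqmod_sum => q _; apply: mact_linear2.
Qed.

Lemma sep_lift_bal v : bal v -> in_span bl (sep_lift v).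
Proof.
case=> [bl_v|[z [a [b ->]]]].
- apply: (bilin_rel_lift (g := lift_gen)) bl_v => *.
  + exact (linear_modD (lift_gen_linear1 _) _ _).
  + exact (linear_modD (lift_gen_linear2 _) _ _).
  + exact (linear_modZ (lift_gen_linear1 _) _ _).
  + exact (linear_modZ (lift_gen_linear2 _) _ _).
- rewrite /sep_lift (is_linearB (fglift_is_linear _)) !fgliftU1 /=.
  apply: eqmod_trans (lift_gen_repr (D := [seq (mB z q.1, q.2) | q <- sdecomp a]) _ _) _.
    rewrite big_map {2}(sdecompE a) (is_linear_sum (s_is_linear z)).
    by apply: eq_bigr => q _; apply: s_morph.
  rewrite big_map /lift_gen; apply: eqmod_sum => q _.
  by rewrite -mact_rmul_1x; apply: mact_sep_mul.
Qed.

Lemma mact_mu a b d : mact a b d =b << (s (mu_op mB d) a, b) >>.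
Proof.
have [l ->] := freeg_lcomb_repr d; rewrite /mact /mu_op !fglift_sumZ.
rewrite (is_linear_sum (s_linear_in a)); apply: eqmod_sym.
apply: eqmod_trans (eqmod_bilin_bal (bilin_sum1 _ _ _)) _; apply: eqmod_sum => p _ /=.
rewrite (is_linearZ (s_linear_in a)); apply: eqmod_trans (eqmod_bilin_bal (bilinZ1 _ _ _)) _.
by apply: eqmodZ; rewrite s_morph; apply: bal_swap.
Qed.

Lemma lift_gen_bal a b : lift_gen a b =b << (a, b) >>.
Proof.
rewrite /lift_gen {2}(sdecompE a).
apply: eqmod_trans (eqmod_sym (eqmod_bilin_bal (bilin_sum1 _ _ _))).
apply: eqmod_sum => q _; have [_ _ mu_sep] := sepP q.1.
by rewrite -{2}mu_sep; apply: mact_mu.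
Qed.

Lemma sep_lift_eqmod w : sep_lift w =b w.
Proof.
have [l ->] := freeg_lcomb_repr w; rewrite /sep_lift fglift_sumZ.
by apply: eqmod_sum => -[k [a b]] _; apply/eqmodZ/lift_gen_bal.
Qed.

Lemma mact_act_left c a b u : act_left mA c (mact a b u) = mact (mA a c) b u.
Proof. by rewrite /act_left /mact fglift_comp; apply: eq_fglift => q; rewrite fgliftU1 /= s_mulA. Qed.

Lemma mact_act_right c a b u : act_right mA c (mact a b u) = mact a (mA b c) u.
Proof. by rewrite /act_right /mact fglift_comp; apply: eq_fglift => q; rewrite fgliftU1 /= t_mulA. Qed.

Lemma sep_lift_act_left c w : sep_lift (act_left mA c w) =o act_left mA c (sep_lift w).
Proof.
rewrite /sep_lift {2}/act_left (linear_fglift _ _ (fglift_is_linear _)) /act_left fglift_comp.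
apply: eqmod_fglift => p; rewrite fgliftU1 /=.
apply: eqmod_trans (lift_gen_repr (D := [seq (q.1, mA q.2 c) | q <- sdecomp p.1]) _ _) _.
  rewrite big_map {2}(sdecompE p.1) (is_linear_sum (mA_linear_l c)).
  by apply: eq_bigr => q _; apply: s_mulA.
rewrite big_map /lift_gen (is_linear_sum (fglift_is_linear _)).
by under [X in _ =o X]eq_bigr do rewrite -/(act_left mA c _) mact_act_left; apply: eqmod_refl.
Qed.

Lemma sep_lift_act_right c w : sep_lift (act_right mA c w) = act_right mA c (sep_lift w).
Proof.
rewrite /sep_lift {2}/act_right (linear_fglift _ _ (fglift_is_linear _)) /act_right fglift_comp.
apply: eq_fglift => p; rewrite fgliftU1 /= /lift_gen (is_linear_sum (fglift_is_linear _)).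
by apply: eq_bigr => q _; rewrite -/(act_right mA c _) mact_act_right.
Qed.

Lemma tensor_nondegenerate_of_separability : tensor_nondegenerate mA s t.
Proof.
have lift_span w : in_span bal w -> in_span bl (sep_lift w).
  exact: span_map (fglift_is_linear _) sep_lift_bal.
split=> w w_c; apply: eqmod_span (eqmod_sym (sep_lift_eqmod w)) _; apply: span_mono bilin_bal _.
- apply: (bilin_nondegenerate_left mA_linear_l mA_nondeg) => c.
  by apply: eqmod_span (eqmod_sym (sep_lift_act_left c w)) _; apply: lift_span.
- apply: (bilin_nondegenerate_right mA_linear_l mA_nondeg) => c.
  by rewrite -sep_lift_act_right; apply: lift_span.
Qed.

End Balanced.

Unset Implicit Arguments.
Set Strict Implicit.

Theorem lemma2p1 (A B : lmodType Cx) (mA : A -> A -> A) (mB : B -> B -> B)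
    (s t : B -> A -> A) :
  is_algebra mA -> is_algebra mB ->
  right_idempotent mA -> right_nondegenerate mA ->
  mult_hom mB mA s -> mult_antihom mB mA t ->
  (forall x y a, s x (t y a) = t y (s x a)) ->
  faithful_idempotent s -> faithful_idempotent t ->
  (right_local_units mA \/
   (exists T, left_separability_multiplier mB T) \/
   (firm mB /\ left_locally_projective mB s /\ right_locally_projective mB t)) ->
  tensor_nondegenerate mA s t.
Proof.
move=> mA_alg mB_alg _ mA_nondeg s_hom t_antihom _ s_faithful t_faithful.
case=> [units|[[T T_sep]|[firm_B [lproj rproj]]]].
- exact: tensor_nondegenerate_of_local_units.
- exact (tensor_nondegenerate_of_separability mA_alg mB_alg s_hom t_antihom mA_nondeg
    s_faithful t_faithful T_sep).
- exact: tensor_nondegenerate_of_firm mA_alg s_hom t_antihom mA_nondeg firm_B lproj rproj.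
Qed.
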